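(* Let $I$ be a 3-SAT instance and $E(I)$ the chore division instance constructed from it (see context), and let $(p,X)$ be a competitive equilibrium of $E(I)$. Let $C_r$ be a clause containing a literal on the variable $x_i$. Then: (1) if the literal is $x_i$ and $X_{a^i_1,b^i_2}>0$, then $p(m^r_i)\ge \tfrac{3\varepsilon}{2}$; (2) if the literal is $\neg x_i$ and $X_{a^i_1,b^i_2}=0$, then $p(m^r_i)\ge 2\varepsilon$.
   Context: Chore division with fixed earnings: agents $A$, chores $B$ each with supply one, disutility $d:A\times B\to(0,\infty)$, earnings $e:A\to\mathbb{R}_{\ge0}$, threshold $\tau$. A competitive equilibrium is $(p,X)$, $p\in\mathbb{R}^{B}_{\ge0}$, $X\in\mathbb{R}^{A\times B}_{\ge0}$, with (1) $X_{ab}>0$ only if $d(a,b)<\tau$ and $d(a,b)/p(b)\le d(a,b')/p(b')$ for all chores $b'$ (ratio with zero price is $+\infty$); (2) $\sum_b X_{ab}p(b)=e(a)$ for all $a$; (3) $\sum_a X_{ab}=1$ for all $b$. Construction $E(I)$: Let $I$ be a 3-SAT instance with variables $x_1,\dots,x_n$ and clauses $C_1,\dots,C_m$, each a disjunction of exactly three literals on three distinct variables. Fix constants $\tau>3$, $0<\varepsilon<1$ and $0<\varepsilon'<\varepsilon/2$. For each variable $x_i$ there are agents $a^i_1,a^i_2$ with $e(a^i_1)=e(a^i_2)=1$ and chores $b^i_1,b^i_2$, with $d(a^i_1,b^i_1)=1$, $d(a^i_1,b^i_2)=3$, $d(a^i_2,b^i_2)=1$. For each clause $C_r$ whose literals involve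 variables $x_i,x_j,x_k$ there are agents $n^r_i,n^r_j,n^r_k,\mathbf{n}^r$ and chores $m^r_i,m^r_j,m^r_k$; for each $\theta\in\{i,j,k\}$: if the literal is $x_\theta$, then $d(n^r_\theta,b^\theta_2)=d(\mathbf{n}^r,b^\theta_2)=1$ and $d(n^r_\theta,m^r_\theta)=d(\mathbf{n}^r,m^r_\theta)=\varepsilon$; if the literal is $\neg x_\theta$, then $d(n^r_\theta,b^\theta_1)=d(\mathbf{n}^r,b^\theta_1)=2/3$ and $d(n^r_\theta,m^r_\theta)=d(\mathbf{n}^r,m^r_\theta)=4\varepsilon/3$. All other disutilities equal $\tau$. Earnings: $e(n^r_\theta)=\varepsilon$ and $e(\mathbf{n}^r)=\#(C_r)\cdot\tfrac{\varepsilon}{2}+\overline{\#}(C_r)\cdot\varepsilon-\varepsilon'$, where $\#(C_r)$ and $\overline{\#}(C_r)$ are the numbers of unnegated and negated literals of $C_r$. *)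

From HB Require Import structures.
From mathcomp Require Import all_boot all_order all_algebra.
Set Implicit Arguments. Unset Strict Implicit. Unset Printing Implicit Defensive.
Import Order.TTheory GRing.Theory Num.Theory.
Local Open Scope ring_scope.

Section Market.
Variables (R : realFieldType) (A B : finType).

(* Comparison of disutility-per-price ratios, with the convention that a ratio
   with zero price is +oo:   d(a,b)/p(b) <= d(a,b')/p(b').  *)
Definition ratio_le (d : A -> B -> R) (p : B -> R) (a : A) (b b' : B) : bool :=
  (p b' == 0) || ((p b != 0) && (d a b / p b <= d a b' / p b')).

Definition competitive_equilibrium (d : A -> B -> R) (e : A -> R) (tau : R)
    (p : B -> R) (X : A -> B -> R) : Prop :=
  (forall b, 0 <= p b) /\ (forall a b, 0 <= X a b) /\
  (forall a b, 0 < X a b -> d a b < tau /\ forall b', ratio_le d p a b b') /\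
  (forall a, \sum_(b : B) X a b * p b = e a) /\
  (forall b, \sum_(a : A) X a b = 1).
End Market.

(* A 3-SAT instance with n variables and m clauses: clause r has three literals
   indexed by t : 'I_3; literal t of clause r is on variable [var r t] and is
   unnegated iff [pos r t].  Variables in a clause are distinct (var r injective). *)

(* agents: a^i_1 | a^i_2 | n^r_theta (indexed by clause r and literal position t) | bold n^r *)
Definition agentE (n m : nat) : finType := (('I_n + 'I_n) + (('I_m * 'I_3) + 'I_m))%type.
(* chores: b^i_1 | b^i_2 | m^r_theta *)
Definition choreE (n m : nat) : finType := (('I_n + 'I_n) + ('I_m * 'I_3))%type.

Definition ag1 {n m} (i : 'I_n) : agentE n m := inl (inl i).
Definition ag2 {n m} (i : 'I_n) : agentE n m := inl (inr i).
Definition agN {n m} (r : 'I_m) (t : 'I_3) : agentE n m := inr (inl (r, t)).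
Definition agNB {n m} (r : 'I_m) : agentE n m := inr (inr r).
Definition ch1 {n m} (i : 'I_n) : choreE n m := inl (inl i).
Definition ch2 {n m} (i : 'I_n) : choreE n m := inl (inr i).
Definition chM {n m} (r : 'I_m) (t : 'I_3) : choreE n m := inr (r, t).

Section Construction.
Variables (R : realFieldType) (n m : nat)
  (var : 'I_m -> 'I_3 -> 'I_n) (pos : 'I_m -> 'I_3 -> bool)
  (tau eps eps' : R).

(* disutility of the clause agents (both n^r_t and bold n^r) for chore m^r_t *)
Definition dM (r : 'I_m) (t : 'I_3) : R := if pos r t then eps else 4 * eps / 3.

Definition dE (a : agentE n m) (b : choreE n m) : R :=
  match a, b with
  | inl (inl i), inl (inl j) => if i == j then 1 else tau        (* a^i_1, b^j_1 *)
  | inl (inl i), inl (inr j) => if i == j then 3 else tau        (* a^i_1, b^j_2 *)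
  | inl (inr i), inl (inr j) => if i == j then 1 else tau        (* a^i_2, b^j_2 *)
  | inr (inl (r, t)), inl (inl j) =>                              (* n^r_t, b^j_1 *)
      if (var r t == j) && ~~ pos r t then 2 / 3 else tau
  | inr (inl (r, t)), inl (inr j) =>                              (* n^r_t, b^j_2 *)
      if (var r t == j) && pos r t then 1 else tau
  | inr (inl (r, t)), inr (r', t') =>                             (* n^r_t, m^r'_t' *)
      if (r == r') && (t == t') then dM r t else tau
  | inr (inr r), inl (inl j) =>                                   (* bold n^r, b^j_1 *)
      if [exists t, (var r t == j) && ~~ pos r t] then 2 / 3 else tau
  | inr (inr r), inl (inr j) =>                                   (* bold n^r, b^j_2 *)
      if [exists t, (var r t == j) && pos r t] then 1 else tau
  | inr (inr r), inr (r', t') =>                                  (* bold n^r, m^r'_t' *)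
      if r == r' then dM r t' else tau
  | _, _ => tau
  end.

Definition npos (r : 'I_m) : nat := #|[set t : 'I_3 | pos r t]|.
Definition nneg (r : 'I_m) : nat := #|[set t : 'I_3 | ~~ pos r t]|.

Definition eE (a : agentE n m) : R :=
  match a with
  | inl _ => 1
  | inr (inl _) => eps
  | inr (inr r) => (npos r)%:R * (eps / 2) + (nneg r)%:R * eps - eps'
  end.
End Construction.

From HB Require Import structures.
From mathcomp Require Import all_boot all_order all_algebra.
From mathcomp Require Import lra.
Set Implicit Arguments. Unset Strict Implicit. Unset Printing Implicit Defensive.
Import Order.TTheory GRing.Theory Num.Theory.
Local Open Scope ring_scope.

(* The proof has three layers.
   1. Facts about an arbitrary competitive equilibrium: allocations lie in
      [0,1], every chore is done by some agent, agents only do chores of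
      disutility below tau, and an agent doing chore b weakly prefers b to any
      other priced chore b', i.e. d(a,b) p(b') <= d(a,b') p(b).
   2. The variable gadget of E(I): a^i_2 can only do b^i_2 and earns 1, so all
      prices are positive; a^i_1 can only do b^i_1 and b^i_2.  If a^i_1 works
      on b^i_2 then p(b^i_1) <= p(b^i_2)/3, and counting the total earnings 2
      of both agents against the unit supply of b^i_2 gives p(b^i_2) >= 3/2.
      If a^i_1 does not work on b^i_2, it earns 1 from b^i_1 alone, so
      p(b^i_1) >= 1.
   3. The clause gadget: chore m^r_t is done by n^r_t or bold n^r, whose
      disutilities make it comparable with b^i_2 (positive literal, ratio eps)
      or with b^i_1 (negative literal, ratio 2 eps); combined with step 2
      this yields the bounds 3 eps / 2 and 2 eps of the theorem. *)

Section Sums.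
Variables (R : numDomainType) (T : finType) (F : T -> R).

Lemma sum_supported1 c : (forall b, b != c -> F b = 0) -> \sum_b F b = F c.
Proof. by move=> F0; rewrite (bigD1 c) //= big1 ?addr0 // => b /F0. Qed.

Lemma sum_supported2 c1 c2 : c1 != c2 ->
  (forall b, b != c1 -> b != c2 -> F b = 0) -> \sum_b F b = F c1 + F c2.
Proof.
move=> c12 F0; rewrite (bigD1 c1) //= (bigD1 c2) /=; last by rewrite eq_sym.
by rewrite big1 ?addr0 // => b /andP[/F0].
Qed.

Lemma le_sum_terms2 c1 c2 : c1 != c2 -> (forall b, 0 <= F b) ->
  F c1 + F c2 <= \sum_b F b.
Proof.
move=> c12 F_ge0; rewrite (bigD1 c1) //= (bigD1 c2) /=; last by rewrite eq_sym.
by rewrite addrA lerDl sumr_ge0.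
Qed.

Lemma le_sum_term c : (forall b, 0 <= F b) -> F c <= \sum_b F b.
Proof. by move=> F_ge0; rewrite (bigD1 c) //= lerDl sumr_ge0. Qed.

Lemma sum_pos_term : (forall b, 0 <= F b) -> \sum_b F b != 0 ->
  exists b, 0 < F b.
Proof.
move=> F_ge0 sum_neq0; apply/existsP; apply: contraR sum_neq0.
rewrite negb_exists => /forallP F_le0; apply/eqP.
by rewrite big1 // => b _; apply/eqP; move: (F_le0 b); rewrite lt_def F_ge0 andbT negbK.
Qed.
End Sums.

Section Equilibrium.
Variables (R : realFieldType) (A B : finType) (d : A -> B -> R) (e : A -> R).
Variables (tau : R) (p : B -> R) (X : A -> B -> R).
Hypothesis ce : competitive_equilibrium d e tau p X.

Lemma ce_price_ge0 b : 0 <= p b.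
Proof. by case: ce. Qed.

Lemma ce_alloc_ge0 a b : 0 <= X a b.
Proof. by case: ce => _ []. Qed.

Lemma ce_earnings a : \sum_b X a b * p b = e a.
Proof. by case: ce => _ [_ [_ []]]. Qed.

Lemma ce_supply b : \sum_a X a b = 1.
Proof. by case: ce => _ [_ [_ []]]. Qed.

Lemma ce_admissible a b : 0 < X a b -> d a b < tau.
Proof. by case: ce => _ [_ [ce_mbb _]] /ce_mbb[]. Qed.

Lemma ce_inadmissible a b : ~~ (d a b < tau) -> X a b = 0.
Proof.
move=> d_ge; apply/eqP; rewrite eq_le ce_alloc_ge0 andbT.
by rewrite leNgt; apply: contra d_ge; apply: ce_admissible.
Qed.

Lemma ce_alloc_le1 a b : X a b <= 1.
Proof. by rewrite -(ce_supply b); apply: le_sum_term => a'; apply: ce_alloc_ge0. Qed.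

Lemma ce_assigned b : exists a, 0 < X a b.
Proof.
by apply: sum_pos_term => [a|]; rewrite ?ce_alloc_ge0 // ce_supply oner_neq0.
Qed.

(* Minimum pain per buck: an agent working on b compares b with every priced
   chore b'; in particular b itself must then be priced. *)
Lemma ce_mpb_price a b b' : 0 < X a b -> 0 < p b' -> 0 < p b.
Proof.
case: ce => _ [_ [ce_mbb _]] /ce_mbb[_ /(_ b')].
rewrite /ratio_le => + pb'; rewrite (gt_eqF pb') /= => /andP[pb0 _].
by rewrite lt_def pb0 ce_price_ge0.
Qed.

Lemma ce_mpb a b b' : 0 < X a b -> 0 < p b' -> d a b * p b' <= d a b' * p b.
Proof.
move=> Xab pb'; have pb := ce_mpb_price Xab pb'.
case: ce => _ [_ [ce_mbb _]]; have [_ /(_ b')] := ce_mbb a b Xab.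
rewrite /ratio_le (gt_eqF pb') (gt_eqF pb) /=.
by rewrite ler_pdivrMr // mulrAC ler_pdivlMr.
Qed.

Lemma ce_prices_pos c : 0 < p c -> forall b, 0 < p b.
Proof. by move=> pc b; have [a Xab] := ce_assigned b; apply: ce_mpb_price Xab pc. Qed.
End Equilibrium.

Section Gadgets.
Variables (R : realFieldType) (n m : nat).
Variables (var : 'I_m -> 'I_3 -> 'I_n) (pos : 'I_m -> 'I_3 -> bool).
Variables (tau eps : R).

Local Notation d := (dE var pos tau eps).

Lemma ag1_admissible (i : 'I_n) b :
  b != ch1 i -> b != ch2 i -> ~~ (d (ag1 i) b < tau).
Proof.
case: b => [[j|j]|[r t]] b1 b2 /=; rewrite ?ltxx //.
all: by case: (i =P j) b1 b2 => [->|]; rewrite ?eqxx ?ltxx.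
Qed.

Lemma ag2_admissible (i : 'I_n) b : b != ch2 i -> ~~ (d (ag2 i) b < tau).
Proof.
case: b => [[j|j]|[r t]] b2 /=; rewrite ?ltxx //.
by case: (i =P j) b2 => [->|]; rewrite ?eqxx ?ltxx.
Qed.

Lemma clause_agent_pos a r t : pos r t -> d a (chM r t) < tau ->
  d a (chM r t) = eps /\ d a (ch2 (var r t)) = 1.
Proof.
move=> pos_rt; case: a => [[j|j]|[[r' t']|r']] /=; rewrite ?ltxx //.
- case: andP => [[/eqP-> /eqP->]|]; rewrite ?ltxx //.
  by rewrite !eqxx pos_rt /dM pos_rt.
- case: eqP => [->|]; rewrite ?ltxx // (_ : [exists _, _] = true) /dM ?pos_rt //.
  by apply/existsP; exists t; rewrite eqxx pos_rt.
Qed.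

Lemma clause_agent_neg a r t : ~~ pos r t -> d a (chM r t) < tau ->
  d a (chM r t) = 4 * eps / 3 /\ d a (ch1 (var r t)) = 2 / 3.
Proof.
move=> neg_rt; case: a => [[j|j]|[[r' t']|r']] /=; rewrite ?ltxx //.
- case: andP => [[/eqP-> /eqP->]|]; rewrite ?ltxx //.
  by rewrite !eqxx neg_rt /dM (negbTE neg_rt).
- case: eqP => [->|]; rewrite ?ltxx // (_ : [exists _, _] = true) /dM ?(negbTE neg_rt) //.
  by apply/existsP; exists t; rewrite eqxx neg_rt.
Qed.

Variables (eps' : R) (p : choreE n m -> R) (X : agentE n m -> choreE n m -> R).
Hypothesis ce : competitive_equilibrium d (eE pos eps eps') tau p X.

Lemma ag2_earning i : X (ag2 i) (ch2 i) * p (ch2 i) = 1.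
Proof.
rewrite -[RHS](ce_earnings ce (ag2 i)); symmetry; apply: sum_supported1 => b b2.
by rewrite (ce_inadmissible ce (ag2_admissible b2)) mul0r.
Qed.

Lemma ag1_earning i :
  X (ag1 i) (ch1 i) * p (ch1 i) + X (ag1 i) (ch2 i) * p (ch2 i) = 1.
Proof.
rewrite -[RHS](ce_earnings ce (ag1 i)); symmetry; apply: sum_supported2 => // b b1 b2.
by rewrite (ce_inadmissible ce (ag1_admissible b1 b2)) mul0r.
Qed.

(* Agent a^i_2 earns its positive income from b^i_2 only, so every price of
   the equilibrium is positive. *)
Lemma gadget_prices_pos (i : 'I_n) b : 0 < p b.
Proof.
apply: (ce_prices_pos ce (c := ch2 i)); rewrite lt_def (ce_price_ge0 ce) andbT.
by apply: contra_neq (oner_neq0 R) => p0; rewrite -(ag2_earning i) p0 mulr0.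
Qed.

Lemma price_ch2_lb i : 0 < X (ag1 i) (ch2 i) -> 3 / 2 <= p (ch2 i).
Proof.
move=> X12; have pos_p := gadget_prices_pos i.
have mpb := ce_mpb ce X12 (pos_p (ch1 i)); rewrite /= !eqxx mul1r in mpb.
have supply2 : X (ag1 i) (ch2 i) + X (ag2 i) (ch2 i) <= 1.
  rewrite -(ce_supply ce (ch2 i)).
  exact: (le_sum_terms2 (F := X^~ (ch2 i))) (fun a => ce_alloc_ge0 ce a _).
have pay1 : X (ag1 i) (ch1 i) * p (ch1 i) <= p (ch1 i).
  exact: ler_piMl (ltW (pos_p _)) (ce_alloc_le1 ce _ _).
have pay2 : (X (ag1 i) (ch2 i) + X (ag2 i) (ch2 i)) * p (ch2 i) <= p (ch2 i).
  exact: ler_piMl (ltW (pos_p _)) supply2.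
have := ag1_earning i; have := ag2_earning i; lra.
Qed.

(* If a^i_1 does not work on b^i_2, it earns its income from b^i_1 alone. *)
Lemma price_ch1_lb i : X (ag1 i) (ch2 i) = 0 -> 1 <= p (ch1 i).
Proof.
move=> X12; have := ag1_earning i; rewrite X12 mul0r addr0 => <-.
exact: ler_piMl (ltW (gadget_prices_pos i _)) (ce_alloc_le1 ce _ _).
Qed.

(* Comparison of the clause chore with the variable chores, via the agent
   who does the clause chore. *)
Lemma clause_price_pos r t :
  pos r t -> eps * p (ch2 (var r t)) <= p (chM r t).
Proof.
move=> pos_rt; have [a Xa] := ce_assigned ce (chM r t).
have [d_m d_2] := clause_agent_pos pos_rt (ce_admissible ce Xa).
have := ce_mpb ce Xa (gadget_prices_pos (var r t) (ch2 (var r t))).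
by rewrite d_m d_2 mul1r.
Qed.

Lemma clause_price_neg r t :
  ~~ pos r t -> 2 * eps * p (ch1 (var r t)) <= p (chM r t).
Proof.
move=> neg_rt; have [a Xa] := ce_assigned ce (chM r t).
have [d_m d_1] := clause_agent_neg neg_rt (ce_admissible ce Xa).
have := ce_mpb ce Xa (gadget_prices_pos (var r t) (ch1 (var r t))).
rewrite d_m d_1; lra.
Qed.
End Gadgets.

Theorem mainTheorem3 (R : realFieldType) (n m : nat)
    (var : 'I_m -> 'I_3 -> 'I_n) (pos : 'I_m -> 'I_3 -> bool)
    (Hvar : forall r, injective (var r))
    (tau eps eps' : R)
    (Htau : 3 < tau) (Heps0 : 0 < eps) (Heps1 : eps < 1)
    (Heps'0 : 0 < eps') (Heps'1 : eps' < eps / 2)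
    (p : choreE n m -> R) (X : agentE n m -> choreE n m -> R)
    (HCE : competitive_equilibrium (dE var pos tau eps) (eE pos eps eps') tau p X)
    (r : 'I_m) (t : 'I_3) :
  let i := var r t in
  (pos r t -> 0 < X (ag1 i) (ch2 i) -> 3 * eps / 2 <= p (chM r t)) /\
  (~~ pos r t -> X (ag1 i) (ch2 i) = 0 -> 2 * eps <= p (chM r t)).
Proof.
move=> i; split.
- move=> pos_rt /(price_ch2_lb HCE) p2.
  have := clause_price_pos HCE pos_rt.
  have : eps * (3 / 2) <= eps * p (ch2 i) by rewrite ler_pM2l.
  rewrite -/i; lra.
- move=> neg_rt /(price_ch1_lb HCE) p1.
  have := clause_price_neg HCE neg_rt.
  have : 2 * eps * 1 <= 2 * eps * p (ch1 i) by rewrite ler_pM2l ?mulr_gt0.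
  rewrite -/i; lra.
Qed.
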